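(* Let $\epsilon\in(0,1)$, $C_0>0$ and $A\ge1$. There exist $\delta>0$, $N_0\in\mathbb N$ and $C>0$ such that for every $n\in\mathbb Z$ with $|n|\ge N_0$ and every dyadic number $M\ge1$, the Lebesgue measure of the set $$\{\mu\in\mathbb R:\ M/2\le|\mu|\le 2M,\ \exists\, r\in\mathbb Z \text{ with } A^{-1}|n|\le |r|\le A|n| \text{ and } |\mu-(r^3-r^2-2nr)|\le C_0|r|^{2-\epsilon}\}$$ is at most $CM^{1-\delta}$.
   Context: A dyadic number is one of the form $2^j$, $j\in\mathbb Z_{\ge0}$. *)

From HB Require Import structures.
From mathcomp Require Import all_boot all_order all_algebra.
From mathcomp Require Import all_classical all_reals all_analysis.
Set Implicit Arguments. Unset Strict Implicit. Unset Printing Implicit Defensive.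
Import Order.TTheory GRing.Theory Num.Theory.
Local Open Scope classical_set_scope.
Local Open Scope ring_scope.

Definition badset (R : realType) (eps C0 A : R) (n : int) (M : R) : set R :=
  [set mu : R | M / 2 <= `|mu| <= 2 * M /\
     exists r : int,
       A^-1 * `|n%:~R : R| <= `|r%:~R : R| <= A * `|n%:~R : R| /\
       `|mu - (r ^+ 3 - r ^+ 2 - 2 * n * r)%:~R| <= C0 * (`|r%:~R : R| `^ (2 - eps))].

From HB Require Import structures.
From mathcomp Require Import all_boot all_order all_algebra.
From mathcomp Require Import all_classical all_reals all_analysis.
From mathcomp Require Import measurable_realfun ring lra zify.
Import Order.TTheory GRing.Theory Num.Theory numFieldNormedType.Exports.
Local Open Scope classical_set_scope.
Local Open Scope ring_scope.

(* If mu lies in the set with witness r, then |r| >= |n|/A is large, so the cubic term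
   dominates: |r|^3 <= 4|mu| <= 8M. Hence r ranges over the O(M^(1/3)) integers with
   |r| <= 2^(j/3 + 2) (M = 2^j), and the set is covered by as many intervals of radius
   C0 (2^(j/3 + 2))^(2-eps) = O(M^((2-eps)/3)). Their total length is O(M^(1-eps/3)),
   which gives delta = eps/3. *)

Lemma le_lebesgue_measure {R : realType} (X Y : set R) : X `<=` Y ->
  (lebesgue_measure X <= lebesgue_measure Y)%E.
Proof.
move=> XY; rewrite /lebesgue_measure /lebesgue_stieltjes_measure /measure_extension.
exact: le_mu_ext.
Qed.

Lemma lebesgue_measure_bigsetU_closed_ball {R : realType} (I : Type) (s : seq I)
    (c : I -> R) (W : R) : 0 <= W ->
  (lebesgue_measure (\big[setU/set0]_(i <- s) closed_ball (c i) W)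
    <= (W *+ 2 *+ size s)%:E)%E.
Proof.
move=> W0; elim: s => [|i s IHs]; first by rewrite big_nil measure0.
rewrite big_cons /= mulrS EFinD.
apply: le_trans (measureU2 lebesgue_measure _ _) _.
- exact: measurable_closed_ball.
- by apply: bigsetU_measurable => j _; exact: measurable_closed_ball.
- by apply: leeD IHs; rewrite -(lebesgue_measure_closed_ball (c i) W0).
Qed.

Lemma lebesgue_measure_cover_closed_ball {R : realType} {I : choiceType} {s : seq I}
    {c : I -> R} {W : R} {X : set R} :
  0 <= W -> X `<=` \bigcup_(i in [set` s]) closed_ball (c i) W ->
  (lebesgue_measure X <= (W *+ 2 *+ size s)%:E)%E.
Proof.
move=> W0; rewrite bigcup_seq => /le_lebesgue_measure/le_trans; apply.
exact: lebesgue_measure_bigsetU_closed_ball.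
Qed.

Definition int_ball (k : nat) : seq int := [seq i%:Z - k%:Z | i <- iota 0 k.*2.+1].

Lemma size_int_ball k : size (int_ball k) = k.*2.+1.
Proof. by rewrite size_map size_iota. Qed.

Lemma mem_int_ball (k : nat) (r : int) : (absz r <= k)%N -> r \in int_ball k.
Proof.
move=> rk; apply/mapP; exists (absz (r + k%:Z)); last by lia.
by rewrite mem_iota; lia.
Qed.

Lemma cube_le_near_cubic {R : realFieldType} {C0 A rho nu mu : R} :
  0 <= C0 -> 0 <= A -> 3 + 4 * A + 4 * C0 <= `|rho| -> `|nu| <= A * `|rho| ->
  `|mu - (rho ^+ 3 - rho ^+ 2 - 2 * nu * rho)| <= C0 * `|rho| ^+ 2 ->
  `|rho| ^+ 3 <= 4 * `|mu|.
Proof.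
move=> C0_ge0 A_ge0 rho_large nu_le near_mu.
have cube_le : `|rho| ^+ 3 <=
    `|rho ^+ 3 - rho ^+ 2 - 2 * nu * rho| + `|rho| ^+ 2 + 2 * `|nu| * `|rho|.
  have split_cube :
    rho ^+ 3 = (rho ^+ 3 - rho ^+ 2 - 2 * nu * rho) + rho ^+ 2 + 2 * nu * rho by ring.
  rewrite -normrX {1}split_cube; apply: le_trans (ler_normD _ _) _.
  by rewrite !normrM (ger0_norm (ler0n R 2)) lerD2r -normrX ler_normD.
have value_le : `|rho ^+ 3 - rho ^+ 2 - 2 * nu * rho| <= `|mu| + C0 * `|rho| ^+ 2.
  set c := rho ^+ 3 - rho ^+ 2 - 2 * nu * rho in near_mu *.
  have -> : c = mu - (mu - c) by ring.
  by apply: le_trans (ler_normB _ _) _; rewrite lerD2l.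
have : `|nu| * `|rho| <= A * `|rho| ^+ 2 by rewrite expr2 mulrA ler_wpM2r.
have : 0 <= `|rho| ^+ 2 * (3 / 4 * `|rho| - (1 + 2 * A + C0)).
  by rewrite mulr_ge0 ?exprn_ge0 // subr_ge0; lra.
have -> : `|rho| ^+ 3 = `|rho| ^+ 2 * `|rho| by rewrite -exprSr.
lra.
Qed.

Lemma le_exp2_div3 (R : numDomainType) (x : R) (j : nat) :
  0 <= x -> x ^+ 3 <= 2 ^+ (j + 3) -> x <= 2 ^+ (j %/ 3 + 2).
Proof.
move=> x_ge0 x3_le; rewrite -(ler_pXn2r (_ : 0 < 3)%N) ?nnegrE ?exprn_ge0 //.
apply: le_trans x3_le _; rewrite -exprM ler_eXn2l ?ltr1n //.
by have := divn_eq j 3; have := ltn_pmod j (isT : 0 < 3)%N; lia.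
Qed.

Lemma powR_expn_div3_le (R : realType) (a s : R) (q j : nat) :
  1 <= a -> 0 <= s -> (3 * q <= j)%N ->
  (a ^+ (q + 2)) `^ s <= a `^ (2 * s) * (a ^+ j) `^ (s / 3).
Proof.
move=> a_ge1 s_ge0 qj.
have a_gt0 : 0 < a by lra.
rewrite -!powR_mulrn ?(ltW a_gt0) // -!powRrM.
rewrite -powRD; last by rewrite (gt_eqF a_gt0) implybT.
apply: ler_powR => //; rewrite natrD.
have : 3 * q%:R <= j%:R :> R by rewrite -natrM ler_nat.
nra.
Qed.

Definition cubic (n r : int) : int := r ^+ 3 - r ^+ 2 - 2 * n * r.

Lemma intr_cubic (R : comPzRingType) (n r : int) :
  (cubic n r)%:~R = r%:~R ^+ 3 - r%:~R ^+ 2 - 2 * n%:~R * r%:~R :> R.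
Proof. by rewrite /cubic !(rmorphB, rmorphM, rmorphXn). Qed.

Lemma badset_cubic_witness {R : realType} {eps C0 A : R} {n : int} {M mu : R} :
  0 <= eps -> 0 < C0 -> 0 < A ->
  (3 + 4 * A + 4 * C0) * A <= `|n%:~R : R| -> badset eps C0 A n M mu ->
  exists2 r : int, `|r%:~R : R| ^+ 3 <= 8 * M &
    `|mu - (cubic n r)%:~R| <= C0 * `|r%:~R : R| `^ (2 - eps).
Proof.
move=> eps_ge0 C0_gt0 A_gt0 n_large [/andP[_ mu_le] [r [/andP[n_le _] near_mu]]].
exists r => //.
have n_le' : `|n%:~R : R| <= A * `|r%:~R : R| by move: n_le; rewrite ler_pdivrMl.
have r_large : 3 + 4 * A + 4 * C0 <= `|r%:~R : R|.
  by rewrite -(ler_pM2l A_gt0) mulrC (le_trans n_large n_le').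
have : `|r%:~R : R| ^+ 3 <= 4 * `|mu|.
  apply: (cube_le_near_cubic (ltW C0_gt0) (ltW A_gt0) r_large n_le').
  rewrite -intr_cubic; apply: le_trans near_mu _; rewrite ler_pM2l //.
  by rewrite -powR_mulrn ?normr_ge0 //; apply: ler_powR; lra.
lra.
Qed.

Lemma badset_sub_cover {R : realType} {eps C0 A : R} {n : int} (j : nat) :
  0 <= eps -> eps <= 2 -> 0 < C0 -> 0 < A ->
  (3 + 4 * A + 4 * C0) * A <= `|n%:~R : R| ->
  badset eps C0 A n (2 ^+ j) `<=`
  \bigcup_(r in [set` int_ball (2 ^ (j %/ 3 + 2))])
    closed_ball ((cubic n r)%:~R : R) (C0 * (2 ^+ (j %/ 3 + 2) : R) `^ (2 - eps)).
Proof.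
move=> eps_ge0 eps_le2 C0_gt0 A_gt0 n_large mu.
case/(badset_cubic_witness eps_ge0 C0_gt0 A_gt0 n_large) => r r3_le near_mu.
have r_le : `|r%:~R : R| <= 2 ^+ (j %/ 3 + 2).
  apply: le_exp2_div3 => //; rewrite exprD mulrC (_ : 2 ^+ 3 = 8) //.
  by rewrite -natrX.
exists r.
  by apply: mem_int_ball; rewrite -(ler_nat R) natr_absz intr_norm natrX.
rewrite closed_ballE /closed_ball_ /=; last by rewrite mulr_gt0 ?powR_gt0 ?exprn_gt0.
rewrite distrC; apply: le_trans near_mu _; rewrite ler_pM2l //.
by apply: ge0_ler_powR; rewrite ?nnegrE ?exprn_ge0 //; lra.
Qed.

Lemma cover_length_le (R : realType) (eps C0 : R) (j : nat) :
  eps < 3 -> 0 <= C0 ->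
  (C0 * (2 ^+ (j %/ 3 + 2) : R) `^ (2 - eps)) *+ 2 *+ (2 ^ (j %/ 3 + 2)).*2.+1
  <= 6 * C0 * 2 `^ (2 * (3 - eps)) * (2 ^+ j) `^ (1 - eps / 3).
Proof.
move=> eps_lt3 C0_ge0.
set K : R := 2 ^+ (j %/ 3 + 2).
have K_ge1 : 1 <= K by rewrite exprn_ege1 // ler1n.
set W := C0 * K `^ (2 - eps).
have W_ge0 : 0 <= W by rewrite mulr_ge0 ?powR_ge0.
have count_le : W *+ 2 *+ (2 ^ (j %/ 3 + 2)).*2.+1 <= 6 * K * W.
  have : K = (2 ^ (j %/ 3 + 2))%N%:R by rewrite natrX.
  move: (2 ^ _)%N (expn_gt0 2 (j %/ 3 + 2)) => k k_gt0 ->.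
  by rewrite -mulrnA -natrM -[W *+ _]mulr_natl ler_wpM2r // ler_nat -addnn; lia.
have KW : K * K `^ (2 - eps) = K `^ (3 - eps).
  have -> : 2 - eps = 3 - eps - 1 by ring.
  by rewrite mulr_powRB1 //; lra.
apply: le_trans count_le _.
rewrite (_ : 6 * K * W = 6 * C0 * K `^ (3 - eps)); last by rewrite /W -KW; ring.
rewrite -[X in _ <= X]mulrA ler_wpM2l ?mulr_ge0 //.
have -> : 1 - eps / 3 = (3 - eps) / 3 by field.
apply: powR_expn_div3_le; [lra | lra |].
by rewrite mulnC leq_divM.
Qed.

Theorem lemma3p4 (R : realType) (eps C0 A : R) :
  0 < eps < 1 -> 0 < C0 -> 1 <= A ->
  exists (delta : R) (N0 : nat) (C : R),
    0 < delta /\ 0 < C /\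
    forall (n : int) (j : nat), (N0 <= `|n|)%N ->
      (lebesgue_measure (badset eps C0 A n (2 ^+ j)) <=
        (C * ((2 ^+ j : R) `^ (1 - delta)))%:E)%E.
Proof.
move=> /andP[eps_gt0 eps_lt1] C0_gt0 A_ge1.
set B := (3 + 4 * A + 4 * C0) * A.
have B_ge0 : 0 <= B by rewrite mulr_ge0 //; lra.
exists (eps / 3), (Num.bound B), (6 * C0 * 2 `^ (2 * (3 - eps))).
split; first lra.
split; first by rewrite !mulr_gt0 ?powR_gt0 //; lra.
move=> n j n_large.
have n_ge : B <= `|n%:~R : R|.
  apply/ltW/(lt_le_trans (archi_boundP B_ge0)).
  by rewrite -intr_norm -natr_absz ler_nat.
have eps_le2 : eps <= 2 by lra.
have A_gt0 : 0 < A by lra.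
have W_ge0 : 0 <= C0 * (2 ^+ (j %/ 3 + 2) : R) `^ (2 - eps).
  by rewrite mulr_ge0 ?powR_ge0 //; lra.
have cover := badset_sub_cover j (ltW eps_gt0) eps_le2 C0_gt0 A_gt0 n_ge.
apply: le_trans (lebesgue_measure_cover_closed_ball W_ge0 cover) _.
by rewrite size_int_ball lee_fin cover_length_le //; lra.
Qed.
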